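(* Let $R$ be a compact Hausdorff unitary topological ring satisfying the first countability axiom, and let $f:M\to N$ be a continuous homomorphism of complete totally disconnected $R$-modules. Then $f$ is strict if and only if $f(M)$ is closed in $N$.
   Context: A complete totally disconnected (t.d.) $R$-module is a Hausdorff, complete topological left $R$-module $M$ which has a basis of neighbourhoods of $0$ consisting of open submodules and which satisfies the second countability axiom. A continuous $R$-linear homomorphism $f:M\to N$ is called strict if the induced bijection $M/\ker(f)\to f(M)$ is a homeomorphism, where $M/\ker f$ carries the quotient topology and $f(M)$ the subspace topology of $N$. *)

From HB Require Import structures.
From mathcomp Require Import all_boot all_order all_algebra generic_quotient.
From mathcomp Require Import all_classical reals topology.
Set Implicit Arguments. Unset Strict Implicit. Unset Printing Implicit Defensive.
Import GRing.Theory.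
Local Open Scope classical_set_scope.
Local Open Scope ring_scope.

HB.structure Definition TopNmodule := {M of Topological M & GRing.Nmodule M}.
HB.structure Definition TopZmodule := {M of Topological M & GRing.Zmodule M}.

(* A (unitary) ring carrying a topology; the axioms of a topological ring
   are imposed separately by [topological_ring]. *)
HB.structure Definition TopNzRing := {R of Topological R & GRing.NzRing R}.
Notation topNzRingType := TopNzRing.type.

(* A left (unital) R-module carrying a topology; the axioms of a
   topological module are imposed separately by [topological_module]. *)
HB.structure Definition TopLmodule (R : nzRingType) :=
  {M of Topological M & GRing.Lmodule R M}.
Notation topLmodType R := (TopLmodule.type R).

Definition topological_ring (R : topNzRingType) : Prop :=
  [/\ continuous (fun p : R * R => p.1 + p.2),
      continuous (fun x : R => - x)
    & continuous (fun p : R * R => p.1 * p.2)].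

Definition first_countable (T : topologicalType) : Prop :=
  forall x : T, exists B : nat -> set T,
    (forall n, nbhs x (B n)) /\ (forall U, nbhs x U -> exists n, B n `<=` U).

Section Modules.
Variable R : topNzRingType.

Definition topological_module (M : topLmodType R) : Prop :=
  [/\ continuous (fun p : M * M => p.1 + p.2),
      continuous (fun x : M => - x)
    & continuous (fun p : R * M => p.1 *: p.2)].

Definition submodule (M : topLmodType R) (V : set M) : Prop :=
  [/\ V 0, (forall x y, V x -> V y -> V (x + y))
    & (forall (r : R) x, V x -> V (r *: x))].

(* Cauchy filters for the (translation-invariant) uniformity of the
   topological abelian group M *)
Definition cauchy_filter (M : topLmodType R) (F : set_system M) : Prop :=
  forall U, nbhs (0 : M) U ->
    exists2 A, F A & (forall x y, A x -> A y -> U (x - y)).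

Definition complete_module (M : topLmodType R) : Prop :=
  forall F : set_system M, ProperFilter F -> cauchy_filter F ->
    exists x : M, F --> x.

Definition complete_td_module (M : topLmodType R) : Prop :=
  [/\ topological_module M,
      hausdorff_space M,
      complete_module M,
      (forall U, nbhs (0 : M) U ->
         exists V : set M, [/\ open V, submodule V & V `<=` U])
    & @second_countable M].

Section Strict.
Local Open Scope quotient_scope.
Variables (M N : topLmodType R) (f : M -> N).

Definition ker_rel : rel M := fun x y => f x == f y.

Lemma ker_rel_refl : reflexive ker_rel.
Proof. by move=> x; rewrite /ker_rel eqxx. Qed.
Lemma ker_rel_sym : symmetric ker_rel.
Proof. by move=> x y; rewrite /ker_rel eq_sym. Qed.
Lemma ker_rel_trans : transitive ker_rel.
Proof. by move=> y x z; rewrite /ker_rel => /eqP -> /eqP ->. Qed.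

Canonical ker_equiv := EquivRel ker_rel ker_rel_refl ker_rel_sym ker_rel_trans.

Definition ker_quot := quotient_topology {eq_quot ker_equiv}.

(* the induced bijection M / ker f -> f(M), where f(M) (a set_type)
   carries the subspace topology *)
Definition induced_map (q : ker_quot) : set_type (range f) :=
  SigSub (mem_set (ex_intro2 _ _ (repr q) I erefl : range f (f (repr q)))).

Definition strict : Prop :=
  exists h : set_type (range f) -> ker_quot,
    [/\ cancel induced_map h, cancel h induced_map,
        continuous induced_map & continuous h].
End Strict.
End Modules.

From HB Require Import structures.
From mathcomp Require Import all_boot all_order all_algebra generic_quotient.
From mathcomp Require Import all_classical reals topology.
Set Implicit Arguments. Unset Strict Implicit. Unset Printing Implicit Defensive.
Import GRing.Theory.
Local Open Scope classical_set_scope.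
Local Open Scope ring_scope.

(* Both M and N have a countable decreasing base of open subgroups at
   0.  Strictness of f amounts to: for every open subgroup V of M, f(V)
   contains W ∩ f(M) for some open subgroup W of N.  Given this, a point of the
   closure of f(M) is a limit of values f(x_j) whose increments lift to small
   increments of x_j, so completeness of M produces a preimage.  Conversely, if
   f(M) is closed it is complete; were no W ∩ f(M) contained in the closure of
   f(V), one could build a Cauchy sequence in f(M) staying away from the image
   of each of the countably many cosets x_i + V, whose limit f(x) is absurd.
   Successive approximation then removes the closure, as in Banach's open
   mapping theorem. *)

Definition subgroup (G : zmodType) (V : set G) :=
  V 0 /\ forall x y, V x -> V y -> V (x - y).

Section Subgroup.
Variables (G : zmodType) (V : set G).
Hypothesis sV : subgroup V.

Lemma subgroup0 : V 0. Proof. by case: sV. Qed.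

Lemma subgroupB x y : V x -> V y -> V (x - y). Proof. by case: sV => _; apply. Qed.

Lemma subgroupN x : V x -> V (- x).
Proof. by move=> Vx; rewrite -sub0r; apply: subgroupB => //; exact: subgroup0. Qed.

Lemma subgroupD x y : V x -> V y -> V (x + y).
Proof. by move=> Vx Vy; rewrite -[y]opprK; apply: subgroupB => //; exact: subgroupN. Qed.

End Subgroup.

Lemma subgroup_range (G H : zmodType) (f : {additive G -> H}) : subgroup (range f).
Proof.
split; first by exists 0; rewrite ?raddf0.
by move=> _ _ [x _ <-] [y _ <-]; exists (x - y); rewrite ?raddfB.
Qed.

Lemma submodule_subgroup (R : topNzRingType) (M : topLmodType R) (V : set M) :
  submodule V -> subgroup V.
Proof.
case=> V0 VD VZ; split => // x y Vx Vy.
by rewrite -scaleN1r; apply: VD => //; exact: VZ.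
Qed.

Lemma topological_module_addr_continuous (R : topNzRingType) (M : topLmodType R) :
  topological_module M -> forall c : M, continuous (fun x => x + c).
Proof.
case=> addC _ _ c x.
apply: (continuous_comp (f := fun x => (x, c))) (addC _).
by apply: cvg_pair; [exact: cvg_id | exact: cvg_cst].
Qed.

Lemma countable_sub_range (T : Type) (B : set (set T)) : countable B ->
  exists g : nat -> set T, B `<=` range g.
Proof. by move=> /pcard_surjP [g gs]; exists g => b /gs [n _ <-]; exists n. Qed.

Section TopologicalGroup.
Variable G : TopZmodule.type.
Hypothesis addr_cont : forall c : G, continuous (fun x => x + c).

Lemma nbhs_coset (V : set G) (c : G) : open V -> V 0 -> nbhs c [set x | V (x - c)].
Proof.
move=> oV V0; apply: open_nbhs_nbhs; split; last by rewrite /= subrr.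
by move: (@addr_cont (- c)) => /continuousP; apply.
Qed.

(* An open subgroup is also closed, so its cosets are stable under limits. *)
Lemma open_subgroup_cvg (I : Type) (F : set_system I) {PF : ProperFilter F}
    (u : I -> G) (l c : G) (V : set G) :
  open V -> subgroup V -> u @ F --> l -> (\forall t \near F, V (u t - c)) ->
  V (l - c).
Proof.
move=> oV sV ul ev.
have evl : \forall t \near F, V (u t - l) := ul _ (nbhs_coset l oV (subgroup0 sV)).
have [t [Vc Vl]] := filter_ex (filterI ev evl).
by have := subgroupB sV Vc Vl; rewrite opprB addrC addrA subrK.
Qed.

Lemma countable_cosets (V : set G) : @second_countable G -> open V -> subgroup V ->
  exists xs : nat -> G, forall x, exists i, V (x - xs i).
Proof.
move=> [B cB hB] oV sV; have [g gB] := countable_sub_range cB.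
have /choice[p hp] : forall k, exists p : G, (exists q, g k q) -> g k p.
  by move=> k; case: (pselect (exists q, g k q)) => [[q gq]|ng]; [exists q | exists 0].
exists p => x; have [b [Bb bx] bV] := hB.2 x _ (nbhs_coset x oV (subgroup0 sV)).
have [k _ gkb] := gB _ Bb; exists k.
have /bV /= Vpx : b (p k) by rewrite -gkb; apply: hp; exists x; rewrite gkb.
by have := subgroupN sV Vpx; rewrite opprB.
Qed.

Definition subgroup_base (V : nat -> set G) :=
  [/\ forall n, open (V n) /\ subgroup (V n), forall n, V n.+1 `<=` V n
    & forall U, nbhs 0 U -> exists n, V n `<=` U].

Lemma second_countable_subgroup_base : @second_countable G ->
  (forall U, nbhs (0 : G) U -> exists2 V, open V /\ subgroup V & V `<=` U) ->
  exists V, subgroup_base V.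
Proof.
move=> [B cB hB] hsub; have [g gB] := countable_sub_range cB.
have /choice[U hU] : forall k, exists U : set G,
    [/\ open U, subgroup U & B (g k) -> g k 0 -> U `<=` g k].
  move=> k.
  case: (pselect (B (g k) /\ g k 0)) => [[Bg g0]|nBg]; last first.
    by exists setT; split=> [|//|Bg g0]; [exact: openT | case: nBg].
  have [V [oV sV] Vg] := hsub _ (open_nbhs_nbhs (conj (hB.1 _ Bg) g0)).
  by exists V.
pose fix W n := if n is n'.+1 then W n' `&` U n else U 0%N.
exists W; split.
- elim=> [|n [oW sW]] /=; first by have [] := hU 0%N.
  have [oU sU _] := hU n.+1; split; first exact: openI.
  split; first by split; [exact: subgroup0 sW | exact: subgroup0 sU].
  by move=> x y [Wx Ux] [Wy Uy]; split; [exact: (subgroupB sW) | exact: (subgroupB sU)].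
- by move=> n x [].
- move=> A /hB.2[b [Bb b0] bA]; have [k _ gkb] := gB _ Bb.
  exists k => x Wx; apply: bA; rewrite -gkb.
  have [_ _ Ug] := hU k; apply: Ug; rewrite ?gkb //.
  by case: k {gkb} Wx => [|k] //= [].
Qed.

Section SubgroupBase.
Variable V : nat -> set G.
Hypothesis bV : subgroup_base V.

Lemma subgroup_base_open n : open (V n). Proof. by case: bV => /(_ n) []. Qed.

Lemma subgroup_base_subgroup n : subgroup (V n). Proof. by case: bV => /(_ n) []. Qed.

Lemma subgroup_base_le m n : (m <= n)%N -> V n `<=` V m.
Proof.
case: bV => _ VS _; apply: (@homo_leq _ _ (fun A B => B `<=` A)) => //.
- exact: subset_refl.
- by move=> B A C AB BC; exact: subset_trans BC AB.
Qed.

Lemma subgroup_base_nbhs (x : G) (U : set G) : nbhs x U ->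
  exists n, forall z, V n (z - x) -> U z.
Proof.
move=> xU; have : nbhs (0 : G) [set z | U (z + x)] by apply: addr_cont; rewrite add0r.
by case: bV => _ _ /[apply] -[n VU]; exists n => z /VU /=; rewrite subrK.
Qed.

Lemma cvg_subgroup_base (u : nat -> G) (l : G) :
  (forall k, \forall j \near \oo, V k (u j - l)) -> u @ \oo --> l.
Proof.
move=> ul U /subgroup_base_nbhs[k VU].
by apply: filterS (ul k) => j /VU.
Qed.

Lemma subgroup_base_telescope (m : nat -> nat) (x : nat -> G) :
  {homo m : i j / (i <= j)%N} -> (forall n, V (m n) (x n.+1 - x n)) ->
  forall n j, (n <= j)%N -> V (m n) (x j - x n).
Proof.
move=> mle dx n; have V0 := subgroup0 (subgroup_base_subgroup (m n)).
elim=> [|j IH]; first by rewrite leqn0 => /eqP n0; rewrite -n0 subrr.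
rewrite leq_eqVlt => /orP[/eqP <-|]; first by rewrite subrr.
rewrite ltnS => nj; rewrite -[x j.+1](subrK (x j)) -addrA.
apply: (subgroupD (subgroup_base_subgroup (m n))) (IH nj).
exact: subgroup_base_le (mle _ _ nj) _ (dx j).
Qed.

Lemma subgroup_base_increasing_index (P : nat -> G -> Prop) :
  (forall n, exists m, forall y, V m y -> P n y) ->
  exists c : nat -> nat, [/\ forall j, (c j < c j.+1)%N, forall j, (j <= c j)%N
    & forall n y, V (c n) y -> P n y].
Proof.
move=> /choice[m0 hm0].
pose fix c j := if j is j'.+1 then maxn (c j').+1 (m0 j) else m0 0%N.
have c_ge j : (m0 j <= c j)%N by case: j => //= j; rewrite leq_maxr.
have c_lt j : (c j < c j.+1)%N by rewrite /= leq_maxl.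
exists c; split => // [j|n y /(subgroup_base_le (c_ge n))]; last exact: hm0.
by elim: j => // j IH; exact: leq_ltn_trans IH (c_lt j).
Qed.

End SubgroupBase.
End TopologicalGroup.

Section CompleteModule.
Variables (R : topNzRingType) (M : topLmodType R).

Lemma complete_td_module_subgroup_base : complete_td_module M ->
  exists V : nat -> set M, subgroup_base V.
Proof.
case=> _ _ _ basis countM; apply: second_countable_subgroup_base => // U /basis.
by case=> V [oV /submodule_subgroup sV VU]; exists V.
Qed.

Lemma subgroup_base_cvg_increments (V : nat -> set M) (x : nat -> M) :
  complete_module M -> subgroup_base V -> (forall n, V n (x n.+1 - x n)) ->
  exists l : M, x @ \oo --> l.
Proof.
move=> cM bV dx; apply: (cM (x @ \oo)) => U nU.
have [_ _ /(_ U nU)[n VU]] := bV.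
exists (x @` [set m | (n <= m)%N]).
  by apply: filterS (nbhs_infty_ge n) => m nm; exists m.
have tel := subgroup_base_telescope bV (m := id) (fun i j ij => ij) dx.
move=> _ _ [m nm <-] [k nk <-]; apply: VU.
have -> : x m - x k = (x m - x n) - (x k - x n) by rewrite opprB addrA subrK.
by apply: (subgroupB (subgroup_base_subgroup bV n)); apply: tel.
Qed.

End CompleteModule.

Section InducedMap.
Local Open Scope quotient_scope.
Variables (R : topNzRingType) (M N : topLmodType R) (f : {linear M -> N}).
Local Notation pi := (\pi_(ker_quot f)).

Lemma pi_eq x y : f x = f y -> pi x = pi y.
Proof. by move=> fxy; apply/eqquotP; rewrite /= /ker_rel fxy. Qed.

Lemma f_repr_pi x : f (repr (pi x)) = f x.
Proof. by have /eqquotP := reprK (pi x); rewrite /= /ker_rel => /eqP. Qed.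

Lemma induced_mapE (q : ker_quot f) : set_val (induced_map q) = f (repr q).
Proof. by []. Qed.

Lemma continuous_induced_map : continuous f -> continuous (@induced_map R M N f).
Proof.
move=> fc; apply/quotient_continuous/continuousP => _ [B oB <-].
have -> : (@induced_map R M N f \o pi) @^-1` (set_val @^-1` B) = f @^-1` B.
  by apply/seteqP; split => x /=; rewrite induced_mapE f_repr_pi.
exact: (continuousP _).1 fc B oB.
Qed.

Lemma open_ker_quot_image (U : set M) : (forall c : M, continuous (fun x => x + c)) ->
  open U -> subgroup U -> open [set q : ker_quot f | exists2 v, U v & f v = f (repr q)].
Proof.
move=> addrM_cont oU sU.
change (open (pi @^-1` [set q : ker_quot f | exists2 v, U v & f v = f (repr q)])).
rewrite openE => x [v Uv fv].
apply: filterS (nbhs_coset addrM_cont x oU (subgroup0 sU)) => z /= Uz.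
exists (v + (z - x)); first exact: (subgroupD sU).
by rewrite linearD linearB fv !f_repr_pi addrC subrK.
Qed.

End InducedMap.

Section OpenMapping.
Variables (R : topNzRingType) (M N : topLmodType R) (f : {linear M -> N}).
Variables (V : nat -> set M) (W : nat -> set N).
Hypotheses (bV : subgroup_base V) (bW : subgroup_base W).
Hypotheses (addrM_cont : forall c : M, continuous (fun x => x + c))
  (addrN_cont : forall c : N, continuous (fun y => y + c)).
Hypotheses (cM : complete_module M) (cN : complete_module N).
Hypotheses (hausN : hausdorff_space N) (fc : continuous f).

Definition open_onto_range :=
  forall n, exists m, forall y, W m y -> range f y -> exists2 x, V n x & f x = y.

Lemma lift_limit (x : nat -> M) (y : N) : (forall j, V j (x j.+1 - x j)) ->
  (f \o x) @ \oo --> y -> exists2 l, x @ \oo --> l & f l = y.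
Proof.
move=> dx fxy; have [l xl] := subgroup_base_cvg_increments cM bV dx.
exists l => //; apply: (cvg_unique hausN _ fxy).
by apply: cvg_comp xl _; exact: fc.
Qed.

Lemma open_onto_range_closed : open_onto_range -> closed (range f).
Proof.
move=> oor; have [c [c_lt c_ge hc]] := subgroup_base_increasing_index bW
  (P := fun n y => range f y -> exists2 x, V n x & f x = y) oor.
move=> y cly.
have /choice[z hz] : forall j, exists z, range f z /\ W (c j) (z - y).
  move=> j; have sW := subgroup_base_subgroup bW (c j).
  have [z [Yz Wz]] := cly _ (nbhs_coset addrN_cont y (subgroup_base_open bW _) (subgroup0 sW)).
  by exists z.
have /choice[v hv] : forall j, exists v, V j v /\ f v = z j.+1 - z j.
  move=> j; have [||v Vv fv] := hc j (z j.+1 - z j); last by exists v.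
    have -> : z j.+1 - z j = (z j.+1 - y) - (z j - y) by rewrite opprB addrA subrK.
    apply: (subgroupB (subgroup_base_subgroup bW (c j))); last exact: (hz j).2.
    exact: (subgroup_base_le bW (ltnW (c_lt j)) (hz j.+1).2).
  by apply: (subgroupB (subgroup_range f)); [exact: (hz _).1 | exact: (hz _).1].
have [x0 _ fx0] := (hz 0%N).1.
pose fix x j := if j is j'.+1 then x j' + v j' else x0.
have dx j : x j.+1 - x j = v j by rewrite /= addrC addKr.
have fx j : f (x j) = z j.
  by elim: j => //= j IH; rewrite linearD IH (hv j).2 addrC subrK.
have [|l _ <-] := lift_limit (x := x) (y := y) (fun j => eq_ind_r (V j) (hv j).1 (dx j)).
  apply: (cvg_subgroup_base addrN_cont bW) => k.
  apply: filterS (nbhs_infty_ge k) => j kj /=; rewrite fx.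
  exact: (subgroup_base_le bW (leq_trans kj (c_ge j)) (hz j).2).
by exists l.
Qed.

Definition approx_image (U : set M) (z : N) :=
  forall k, exists2 v, U v & W k (f v - z).

Lemma approx_imageB (U : set M) a b : subgroup U ->
  approx_image U a -> approx_image U b -> approx_image U (b - a).
Proof.
move=> sU Ua Ub k; have [v1 Uv1 Wv1] := Ub k; have [v2 Uv2 Wv2] := Ua k.
exists (v1 - v2); first exact: (subgroupB sU).
have -> : f (v1 - v2) - (b - a) = (f v1 - b) - (f v2 - a).
  by rewrite linearB !opprD !opprK addrACA.
by apply: (subgroupB (subgroup_base_subgroup bW k)).
Qed.

Lemma not_approx_image (U : set M) z : ~ approx_image U z ->
  exists k, forall v, U v -> ~ W k (f v - z).
Proof.
move=> /existsNP[k nk]; exists k => v Uv Wv.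
by apply: nk; exists v.
Qed.

Lemma not_approx_image_near (U : set M) m : subgroup U ->
  (exists y, [/\ W m y, range f y & ~ approx_image U y]) ->
  forall a, range f a -> exists z, [/\ range f z, W m (z - a) & ~ approx_image U z].
Proof.
move=> sU [y [Wy Yy ny]] a Ya; apply: contrapT => /forallNP no_far.
have near_approx z : range f z -> W m (z - a) -> approx_image U z.
  by move=> Yz Wz; apply: contrapT => nz; apply: (no_far z).
apply: ny; rewrite -(addrK a y); apply: approx_imageB => //.
  by apply: near_approx; rewrite // subrr; exact: subgroup0 (subgroup_base_subgroup bW m).
by apply: near_approx; [exact: (subgroupD (subgroup_range f)) | rewrite addrK].
Qed.

Lemma far_from_coset_image (U : set M) :
  subgroup U -> (forall m, exists y, [/\ W m y, range f y & ~ approx_image U y]) ->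
  forall x0 y m, range f y -> exists z k, [/\ range f z, W m (z - y), (m < k)%N
    & forall v, U v -> ~ W k (f (x0 + v) - z)].
Proof.
move=> sU bad x0 y m Yy.
have Yyx : range f (y - f x0) by apply: (subgroupB (subgroup_range f)) => //; exists x0.
have [z [Yz Wz nz]] := not_approx_image_near sU (bad m) Yyx.
have [k hk] := not_approx_image nz.
exists (z + f x0), (maxn k m.+1); split.
- by apply: (subgroupD (subgroup_range f)) => //; exists x0.
- by rewrite -addrA -opprB.
- by rewrite leq_max leqnn orbT.
- move=> v Uv; apply: contra_not (hk v Uv).
  rewrite linearD [z + _]addrC [f x0 + _]addrC addrKA.
  exact: (subgroup_base_le bW (leq_maxl k m.+1)).
Qed.

(* If f(M) is closed, a Baire-type argument over the countably many cosets of
   U shows that some W m ∩ f(M) lies in the closure of f(U). *)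
Lemma closed_range_approx_image (U : set M) : @second_countable M ->
  closed (range f) -> open U -> subgroup U ->
  exists m, forall y, W m y -> range f y -> approx_image U y.
Proof.
move=> countM clY oU sU; apply: contrapT => /forallNP nC.
have bad m : exists y, [/\ W m y, range f y & ~ approx_image U y].
  have /existsNP[y /not_implyP[Wy /not_implyP[Yy ny]]] := nC m.
  by exists y.
have [xs hxs] := countable_cosets addrM_cont countM oU sU.
have /choice[st hst] : forall p : nat * (N * nat), exists q : N * nat,
    range f p.2.1 -> [/\ range f q.1, W p.2.2 (q.1 - p.2.1), (p.2.2 < q.2)%N
      & forall v, U v -> ~ W q.2 (f (xs p.1 + v) - q.1)].
  move=> [i [y m]] /=; case: (pselect (range f y)) => [Yy|nY]; last by exists (0, 0%N) => /nY.
  by have [z [k hzk]] := far_from_coset_image sU bad (xs i) m Yy; exists (z, k).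
pose fix sq i := if i is i'.+1 then st (i', sq i') else (0 : N, 0%N).
have Ysq i : range f (sq i).1.
  elim: i => [|i IH] /=; first exact: subgroup0 (subgroup_range f).
  by case: (hst (i, sq i) IH).
have spec i := hst (i, sq i) (Ysq i).
have dsq i : W (sq i).2 ((sq i.+1).1 - (sq i).1) by have [] := spec i.
have m_nd : {homo (fun i => (sq i).2) : i j / (i <= j)%N}.
  by apply: (homo_leq leqnn leq_trans) => i; have [_ _ /ltnW] := spec i.
have m_ge i : (i <= (sq i).2)%N.
  by elim: i => // i IH; have [_ _ lt _] := spec i; exact: leq_ltn_trans IH lt.
have [ys sqy] := subgroup_base_cvg_increments cN bW (x := fun i => (sq i).1)
  (fun i => subgroup_base_le bW (m_ge i) (dsq i)).
have [x _ fx] : range f ys.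
  apply: clY => B /sqy Bsq.
  have [j Bj] := filter_ex (Bsq : \forall j \near \oo, B (sq j).1).
  by exists (sq j).1.
have [i Ux] := hxs x; have [_ _ _ far] := spec i.
apply: (far (x - xs i) Ux); rewrite [xs i + _]addrC subrK fx.
apply: (open_subgroup_cvg addrN_cont (subgroup_base_open bW _)
  (subgroup_base_subgroup bW _) sqy).
apply: filterS (nbhs_infty_ge i.+1) => j ij.
exact: (subgroup_base_telescope bW m_nd dsq ij).
Qed.

Lemma approx_image_series (c : nat -> nat) :
  (forall n y, W (c n) y -> range f y -> approx_image (V n) y) ->
  forall n y, W (c n) y -> range f y ->
  exists s : nat -> M, [/\ s 0%N = 0, forall j, V (n + j)%N (s j.+1 - s j)
    & forall j, W (c (n + j)%N) (y - f (s j))].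
Proof.
move=> hc n y Wy Yy.
have /choice[g hg] : forall p : nat * N, exists u,
    W (c p.1) p.2 -> range f p.2 -> V p.1 u /\ W (c p.1.+1) (p.2 - f u).
  move=> [k r] /=; case: (pselect (W (c k) r /\ range f r)) => [[Wr Yr]|nr]; last first.
    by exists 0 => Wr Yr; case: nr.
  have [u Vu Wu] := hc _ _ Wr Yr (c k.+1); exists u => _ _; split => //.
  by rewrite -opprB; apply: (subgroupN (subgroup_base_subgroup bW _)).
pose fix s j := if j is j'.+1 then s j' + g ((n + j')%N, y - f (s j')) else 0.
have Ys j : range f (y - f (s j)) by apply: (subgroupB (subgroup_range f)) => //; exists (s j).
have Ws j : W (c (n + j)%N) (y - f (s j)).
  elim: j => [|j IH]; first by rewrite addn0 /= linear0 subr0.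
  have [_ Wg] := hg ((n + j)%N, y - f (s j)) IH (Ys j).
  by rewrite addnS /= linearD opprD addrA.
exists s; split => // j.
rewrite /= addrC addKr.
by have [] := hg ((n + j)%N, y - f (s j)) (Ws j) (Ys j).
Qed.

Lemma approx_image_open_onto_range :
  (forall n, exists m, forall y, W m y -> range f y -> approx_image (V n) y) ->
  open_onto_range.
Proof.
move=> happrox; have [c [_ c_ge hc]] := subgroup_base_increasing_index bW
  (P := fun n y => range f y -> approx_image (V n) y) happrox.
move=> n; exists (c n) => y Wy Yy.
have [s [s0 ds Ws]] := approx_image_series hc Wy Yy.
have sVn : subgroup (V n) := subgroup_base_subgroup bV n.
have Vs j : V n (s j).
  elim: j => [|j IH]; first by rewrite s0; exact: subgroup0 sVn.
  rewrite -(subrK (s j) (s j.+1)); apply: (subgroupD sVn) => //.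
  exact: (subgroup_base_le bV (leq_addr j n) (ds j)).
have [|l sl <-] := lift_limit (x := s) (y := y)
    (fun j => subgroup_base_le bV (leq_addl n j) (ds j)).
  apply: (cvg_subgroup_base addrN_cont bW) => k.
  apply: filterS (nbhs_infty_ge k) => j kj /=; rewrite -opprB.
  apply: (subgroupN (subgroup_base_subgroup bW _)).
  apply: (subgroup_base_le bW (leq_trans kj _)) (Ws j).
  exact: leq_trans (leq_addl n j) (c_ge _).
exists l => //; rewrite -[l]subr0.
apply: (open_subgroup_cvg addrM_cont (subgroup_base_open bV n) sVn sl).
by apply: nearW => j; rewrite subr0.
Qed.

Lemma closed_range_iff_open_onto_range : @second_countable M ->
  closed (range f) <-> open_onto_range.
Proof.
move=> countM; split; last exact: open_onto_range_closed.
move=> clY; apply: approx_image_open_onto_range => n.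
exact: closed_range_approx_image countM clY (subgroup_base_open bV n)
  (subgroup_base_subgroup bV n).
Qed.

Section Strict.
Local Open Scope quotient_scope.
Local Notation pi := (\pi_(ker_quot f)).

Lemma strict_open_onto_range : strict f -> open_onto_range.
Proof.
move=> [h [hK _ _ ch]] n.
pose Q := [set q : ker_quot f | exists2 v, V n v & f v = f (repr q)].
have [B oB BQ] : exists2 B : set N, open B & set_val @^-1` B = h @^-1` Q :=
  (continuousP _).1 ch Q (open_ker_quot_image f addrM_cont (subgroup_base_open bV n)
    (subgroup_base_subgroup bV n)).
have BQ_pi x : B (f x) = Q (pi x).
  by have := congr1 (@^~ (induced_map (pi x))) BQ; rewrite /= induced_mapE hK f_repr_pi.
have B0 : B 0.
  rewrite -(linear0 f) BQ_pi; exists 0; rewrite ?f_repr_pi //.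
  exact: subgroup0 (subgroup_base_subgroup bV n).
have [_ _ /(_ B (open_nbhs_nbhs (conj oB B0)))[m WB]] := bW.
exists m => y /WB + [x _ fxy]; rewrite -fxy BQ_pi => -[v Vv fv].
by exists v; rewrite // fv f_repr_pi.
Qed.

Lemma open_onto_range_continuous_section (m : nat -> nat) (pre : set_type (range f) -> M) :
  (forall n y, W (m n) y -> range f y -> exists2 x, V n x & f x = y) ->
  (forall s, f (pre s) = set_val s) -> continuous (fun s => pi (pre s)).
Proof.
move=> hm hpre; apply/continuousP => A oA.
pose B := [set y : N | exists x n, [/\ A (pi x), (forall z, V n (z - x) -> A (pi z))
  & W (m n) (y - f x)]].
change (exists2 B : set N, open B & set_val @^-1` B = (fun s => pi (pre s)) @^-1` A).
exists B.
  rewrite openE => y [x [n [Ax hx Wy]]]; have sW := subgroup_base_subgroup bW (m n).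
  apply: filterS (nbhs_coset addrN_cont y (subgroup_base_open bW _) (subgroup0 sW)).
  move=> y' /= Wy'; exists x, n; split => //.
  by rewrite -(subrK y y') -addrA; apply: (subgroupD sW).
apply/seteqP; split => s /=.
  move=> [x [n [Ax hx Wy]]].
  have Yfx : range f (f x) by exists x.
  have [v Vv fv] := hm n _ Wy (subgroupB (subgroup_range f) (set_valP s) Yfx).
  have -> : pi (pre s) = pi (x + v) by apply: pi_eq; rewrite linearD fv hpre addrC subrK.
  by apply: hx; rewrite [x + v]addrC addrK.
move=> As; exists (pre s).
have nA : nbhs (pre s) (pi @^-1` A).
  by apply: open_nbhs_nbhs; split; [exact: oA | exact: As].
have [n hn] := subgroup_base_nbhs addrM_cont bV nA.
exists n; split => //; rewrite hpre subrr; exact: subgroup0 (subgroup_base_subgroup bW _).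
Qed.

Lemma strict_iff_open_onto_range : strict f <-> open_onto_range.
Proof.
split; first exact: strict_open_onto_range.
move=> /choice[m hm].
have /choice[pre hpre] : forall s : set_type (range f), exists x, f x = set_val s.
  by move=> s; have [x _ fx] := set_valP s; exists x.
exists (fun s => pi (pre s)); split.
- by move=> q; rewrite -[RHS]reprK; apply: pi_eq; rewrite hpre.
- by move=> s; apply: val_inj; rewrite -set_valE induced_mapE f_repr_pi hpre.
- exact: continuous_induced_map.
- exact: (open_onto_range_continuous_section hm hpre).
Qed.

End Strict.

End OpenMapping.

Theorem proposition1p1 (R : topNzRingType) (M N : topLmodType R)
  (f : {linear M -> N}) :
  topological_ring R -> compact [set: R] -> hausdorff_space R ->
  first_countable R ->
  complete_td_module M -> complete_td_module N -> continuous f ->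
  strict f <-> closed (range f).
Proof.
move=> _ _ _ _ tdM tdN fc.
have [V bV] := complete_td_module_subgroup_base tdM.
have [W bW] := complete_td_module_subgroup_base tdN.
case: tdM tdN => [hM _ cM _ countM] [hN hausN cN _ _].
have addrM := topological_module_addr_continuous hM.
have addrN := topological_module_addr_continuous hN.
apply: iff_trans (strict_iff_open_onto_range bV bW addrM addrN fc) _.
exact: iff_sym (closed_range_iff_open_onto_range bV bW addrM addrN cM cN hausN fc countM).
Qed.
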